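(* Let $C$ be a normal, closed cone with nonempty interior in a real Banach space and let $u\in\operatorname{int} C$. Then the map $f(x)=x+u$ is $\tau$-condensing on $\operatorname{int} C$.
   Context: A closed cone $C$ (closed convex, $\lambda C\subseteq C$ for $\lambda\ge0$, $C\cap(-C)=\{0\}$) induces the order $x\le y$ iff $y-x\in C$. $C$ is normal if there is $\kappa$ with $\|x\|\le\kappa\|y\|$ whenever $0\le x\le y$. Thompson's metric on $\operatorname{int}C$: $d_T(x,y)=\log\inf\{\beta\ge1:\beta^{-1}x\le y\le\beta x\}$. For a $d_T$-bounded set $A\subseteq\operatorname{int}C$, $\tau(A)=\inf\{d>0: A$ has a finite cover by sets of $d_T$-diameter $\le d\}$. A continuous map $f:D\to\operatorname{int}C$ ($D\subseteq \operatorname{int}C$) is $\tau$-condensing if $\tau(f(A))<\tau(A)$ for every $d_T$-bounded $A\subseteq D$ with $\tau(A)>0$. *)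

From HB Require Import structures.
From mathcomp Require Import all_boot all_order all_algebra.
From mathcomp Require Import all_classical all_reals all_analysis.
Set Implicit Arguments. Unset Strict Implicit. Unset Printing Implicit Defensive.
Import Order.TTheory GRing.Theory Num.Theory.
Import numFieldNormedType.Exports.
Local Open Scope classical_set_scope.
Local Open Scope ring_scope.

Section Cones.
Context {R : realType} {V : normedModType R}.

Definition is_closed_cone (C : set V) : Prop :=
  closed C /\
  (forall x y (t : R), C x -> C y -> 0 <= t -> t <= 1 ->
       C (t *: x + (1 - t) *: y)) /\
  (forall (l : R) x, 0 <= l -> C x -> C (l *: x)) /\
  (forall x, C x -> C (- x) -> x = 0).

Definition cle (C : set V) (x y : V) : Prop := C (y - x).

Definition normal_cone (C : set V) : Prop :=
  exists kappa : R, forall x y, cle C 0 x -> cle C x y -> `|x| <= kappa * `|y|.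

Definition thompson (C : set V) (x y : V) : R :=
  ln (inf [set b : R | 1 <= b /\ cle C (b^-1 *: x) y /\ cle C y (b *: x)]).

Definition dT_bounded (C : set V) (A : set V) : Prop :=
  A `<=` interior C /\
  exists M : R, forall x y, A x -> A y -> thompson C x y <= M.

Definition dT_diam_le (C : set V) (S : set V) (d : R) : Prop :=
  forall x y, S x -> S y -> thompson C x y <= d.

Definition tau (C : set V) (A : set V) : R :=
  inf [set d : R | 0 < d /\
     exists (n : nat) (S : nat -> set V),
       (forall i, (i < n)%N -> dT_diam_le C (S i) d) /\
       (forall a, A a -> exists2 i, (i < n)%N & S i a)].

Definition tau_condensing (C : set V) (D : set V) (f : V -> V) : Prop :=
  (forall x, D x -> interior C (f x)) /\
  (forall x, D x -> forall e : R, 0 < e -> exists2 delta : R, 0 < delta &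
      forall y, D y -> thompson C x y < delta -> thompson C (f x) (f y) < e) /\
  (forall A, A `<=` D -> dT_bounded C A -> 0 < tau C A ->
      tau C (f @` A) < tau C A).

End Cones.

From HB Require Import structures.
From mathcomp Require Import all_boot all_order all_algebra.
From mathcomp Require Import all_classical all_reals all_analysis.
From mathcomp Require Import lra ring.
Set Implicit Arguments. Unset Strict Implicit. Unset Printing Implicit Defensive.
Import Order.TTheory GRing.Theory Num.Theory.
Import numFieldNormedType.Exports.
Local Open Scope classical_set_scope.
Local Open Scope ring_scope.

(* Key estimate: if b^-1 x <= y <= b x and x, y <= c u with c > 0, then
   g^-1 (x + u) <= y + u <= g (x + u) for g = (1 + b c) / (1 + c), and g < b
   as soon as b > 1.  So translation by u never increases Thompson distances,
   and on a set order-bounded by c u it turns every distance below ln B into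
   one at most ln ((1 + B c) / (1 + c)).

   Continuity follows from the key estimate
   directly; for the condensing inequality, a d_T-bounded set is order
   bounded by a multiple of u, so a cover of A by sets of diameter slightly
   above tau(A) is mapped onto a cover of f(A) by sets of diameter < tau(A). *)

Section TranslationCondensing.
Context {R : realType} {V : normedModType R} (C : set V).
Hypothesis hC : is_closed_cone C.

Lemma cone_scale (l : R) (x : V) : 0 <= l -> C x -> C (l *: x).
Proof. by case: hC => _ [_ [hs _]]; apply: hs. Qed.

Lemma cone_add (x y : V) : C x -> C y -> C (x + y).
Proof.
case: hC => _ [hcv _] Cx Cy.
have half : (1 - 2^-1 : R) = 2^-1 by field.
have Cmid : C (2^-1 *: x + (1 - 2^-1) *: y).
  by apply: hcv => //; rewrite ?invr_ge0 ?invf_le1 ?ler1n //; lra.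
have := cone_scale (ler0n R 2) Cmid.
by rewrite half -scalerDr scalerA divff ?pnatr_eq0 // scale1r.
Qed.

Lemma cone_dom_mono (u x : V) (b c : R) :
  C u -> C (b *: u - x) -> b <= c -> C (c *: u - x).
Proof.
move=> Cu Cbux bc.
have -> : c *: u - x = (c - b) *: u + (b *: u - x) by rewrite addrA scalerBl subrK.
by apply: cone_add => //; apply: cone_scale => //; rewrite subr_ge0.
Qed.

Lemma interior_ball (x : V) :
  interior C x -> exists2 r : R, 0 < r & forall z, `|x - z| < r -> C z.
Proof.
move=> /nbhs_ballP [r r0 hr]; exists r => // z hz; apply: hr.
by rewrite -ball_normE /ball_ /=.
Qed.

Lemma interior_absorbing (x y : V) :
  interior C x -> exists2 b : R, 1 <= b & C (b *: x - y).
Proof.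
move=> hx; have [r r0 hr] := interior_ball hx.
set t := r / (2 * (`|y| + 1)).
have ny := normr_ge0 y.
have t0 : 0 < t by rewrite /t divr_gt0 // mulr_gt0 // ltr_pwDr.
have Cxty : C (x - t *: y).
  apply: hr; rewrite opprB addrC subrK normrZ gtr0_norm //.
  rewrite /t mulrC mulrA ltr_pdivrMr ?mulr_gt0 ?ltr_pwDr // mulrC ltr_pM2l //.
  lra.
exists (Num.max 1 t^-1); first by rewrite le_max lexx.
have -> : Num.max 1 t^-1 *: x - y
          = (Num.max 1 t^-1 - t^-1) *: x + t^-1 *: (x - t *: y).
  by rewrite scalerBr scalerA mulVf ?gt_eqF // scale1r scalerBl addrA subrK.
apply: cone_add; apply: cone_scale => //.
- by rewrite subr_ge0 le_max lexx orbT.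
- exact: (interior_subset hx).
- by rewrite invr_ge0 ltW.
Qed.

Lemma common_dominator (u x y : V) :
  interior C u -> exists2 c : R, 0 < c & C (c *: u - x) /\ C (c *: u - y).
Proof.
move=> hu; have Cu := interior_subset hu.
have [b1 b11 h1] := interior_absorbing x hu.
have [b2 b21 h2] := interior_absorbing y hu.
exists (Num.max b1 b2); first by rewrite lt_max; apply/orP; left; lra.
by split; apply: (cone_dom_mono Cu); [exact: h1 | | exact: h2 |];
  rewrite le_max lexx ?orbT.
Qed.

Lemma interior_addl (x u : V) : C x -> interior C u -> interior C (x + u).
Proof.
move=> Cx hu; have [r r0 hr] := interior_ball hu.
apply/nbhs_ballP; exists r => // z; rewrite -ball_normE /ball_ /= => hz.
have -> : z = x + (z - x) by rewrite addrC subrK.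
by apply: cone_add => //; apply: hr; rewrite opprB addrA (addrC u).
Qed.

Definition thompson_set (x y : V) : set R :=
  [set b : R | 1 <= b /\ cle C (b^-1 *: x) y /\ cle C y (b *: x)].

Lemma thompsonE (x y : V) : thompson C x y = ln (inf (thompson_set x y)).
Proof. by []. Qed.

Lemma thompson_set_lbound (x y : V) : lbound (thompson_set x y) 1.
Proof. by move=> b []. Qed.

(* Interior points are comparable: b = max (b1, b2) with y <= b1 x, x <= b2 y. *)
Lemma thompson_set_ne (x y : V) :
  interior C x -> interior C y -> thompson_set x y !=set0.
Proof.
move=> hx hy.
have [b1 b11 h1] := interior_absorbing y hx.
have [b2 b21 h2] := interior_absorbing x hy.
have Cx := interior_subset hx; have Cy := interior_subset hy.
set b := Num.max b1 b2.
have b0 : 0 < b by rewrite lt_max; apply/orP; left; lra.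
exists b; split; first by rewrite le_max b11.
split; rewrite /cle.
- have -> : y - b^-1 *: x = b^-1 *: ((b - b2) *: y + (b2 *: y - x)).
    by rewrite addrA -scalerDl subrK scalerBr scalerA mulVf ?gt_eqF // scale1r.
  apply: cone_scale; first by rewrite invr_ge0 ltW.
  by apply: cone_add => //; apply: cone_scale => //; rewrite subr_ge0 le_max lexx orbT.
- have -> : b *: x - y = (b - b1) *: x + (b1 *: x - y) by rewrite addrA scalerBl subrK.
  by apply: cone_add => //; apply: cone_scale => //; rewrite subr_ge0 le_max lexx.
Qed.

Lemma thompson_le (x y : V) (b : R) : thompson_set x y b -> thompson C x y <= ln b.
Proof.
move=> hb; rewrite thompsonE.
have i1 : 1 <= inf (thompson_set x y).
  by apply: lb_le_inf; [exists b | exact: thompson_set_lbound].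
have ib : inf (thompson_set x y) <= b.
  by apply: ge_inf => //; exists 1; exact: thompson_set_lbound.
by rewrite ler_ln // posrE; lra.
Qed.

Lemma thompson_lt (x y : V) (B : R) :
  interior C x -> interior C y -> 0 < B -> thompson C x y < ln B ->
  exists2 b, thompson_set x y b & b < B.
Proof.
move=> hx hy B0 hxy; apply: inf_lt; first exact: thompson_set_ne.
have i1 : 1 <= inf (thompson_set x y).
  by apply: lb_le_inf; [exact: thompson_set_ne | exact: thompson_set_lbound].
by move: hxy; rewrite thompsonE ltr_ln // posrE; lra.
Qed.

(* The comparison constant of the translates, g = (1 + b c) / (1 + c). *)
Definition shift_ratio (b c : R) : R := (1 + b * c) / (1 + c).

Lemma shift_ratio_ge1 (b c : R) : 1 <= b -> 0 < c -> 1 <= shift_ratio b c.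
Proof. by move=> b1 c0; rewrite /shift_ratio ler_pdivlMr ?mul1r; [nra | lra]. Qed.

Lemma shift_ratio_gt1 (b c : R) : 1 < b -> 0 < c -> 1 < shift_ratio b c.
Proof. by move=> b1 c0; rewrite /shift_ratio ltr_pdivlMr ?mul1r; [nra | lra]. Qed.

Lemma shift_ratio_mono (b B c : R) : 0 < c -> b <= B -> shift_ratio b c <= shift_ratio B c.
Proof. by move=> c0 bB; rewrite /shift_ratio ler_pM2r ?invr_gt0; [nra | lra]. Qed.

Lemma shift_ratio_lt (b c : R) : 1 < b -> 0 < c -> shift_ratio b c < b.
Proof. by move=> b1 c0; rewrite /shift_ratio ltr_pdivrMr; [nra | lra]. Qed.

Lemma shift_ratio_gap (E c : R) :
  1 < E -> 0 < c -> exists2 B, E < B & shift_ratio B c < E.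
Proof.
move=> E1 c0; set k := (E - 1) / (2 * c).
exists (E + k); first by rewrite ltrDl; apply: divr_gt0; lra.
have hk : (E + k) * c = E * c + (E - 1) / 2 by rewrite /k; field; lra.
rewrite /shift_ratio ltr_pdivrMr; last lra.
by rewrite hk; lra.
Qed.

(* Upper half of the key estimate:
   g (x + u) - (y + u) = (b x - y) + (b - g) (c u - x), with b - g >= 0. *)
Lemma shift_upper (b c : R) (x y u : V) : 1 <= b -> 0 < c ->
  C (b *: x - y) -> C (c *: u - x) -> C (shift_ratio b c *: (x + u) - (y + u)).
Proof.
move=> b1 c0 hxy hux; set g := shift_ratio b c.
have gc : (b - g) * c = g - 1 by rewrite /g /shift_ratio; field; lra.
have -> : g *: (x + u) - (y + u) = (b *: x - y) + (b - g) *: (c *: u - x).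
  rewrite scalerBr scalerA gc !scalerBl !scale1r scalerDr opprB opprD !addrA.
  by rewrite [RHS](ACl (1*6*5*3*2*4)) /= addrN add0r.
apply: cone_add => //; apply: cone_scale => //.
by rewrite subr_ge0 /g /shift_ratio ler_pdivrMr; [nra | lra].
Qed.

Lemma thompson_set_shift (b c : R) (x y u : V) : 0 < c ->
  C (c *: u - x) -> C (c *: u - y) -> thompson_set x y b ->
  thompson_set (x + u) (y + u) (shift_ratio b c).
Proof.
move=> c0 hx hy [b1 [hyx hxy]]; rewrite /cle in hyx hxy.
have g1 := shift_ratio_ge1 b1 c0.
split => //; split; last exact: shift_upper.
have hbyx : C (b *: y - x).
  have -> : b *: y - x = b *: (y - b^-1 *: x).
    by rewrite scalerBr scalerA divff ?gt_eqF ?scale1r //; lra.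
  by apply: cone_scale => //; lra.
have := shift_upper b1 c0 hbyx hy; rewrite /cle.
have -> : y + u - (shift_ratio b c)^-1 *: (x + u)
          = (shift_ratio b c)^-1 *: (shift_ratio b c *: (y + u) - (x + u)).
  by rewrite scalerBr scalerA mulVf ?scale1r // gt_eqF //; lra.
by move=> h; apply: cone_scale => //; rewrite invr_ge0; lra.
Qed.

Lemma thompson_shift_le (u x y : V) (c B : R) :
  interior C x -> interior C y -> 0 < c -> C (c *: u - x) -> C (c *: u - y) ->
  0 < B -> thompson C x y < ln B ->
  thompson C (x + u) (y + u) <= ln (shift_ratio B c).
Proof.
move=> hx hy c0 hux huy B0 hxy.
have [b hb bB] := thompson_lt hx hy B0 hxy.
apply: le_trans (thompson_le (thompson_set_shift c0 hux huy hb)) _.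
have b1 : 1 <= b by case: hb.
rewrite ler_ln ?posrE ?shift_ratio_mono ?ltW //.
- by apply: lt_le_trans (shift_ratio_ge1 b1 c0); lra.
- by apply: lt_le_trans (shift_ratio_ge1 _ c0); lra.
Qed.

Definition tau_covers (A : set V) : set R :=
  [set d : R | 0 < d /\
     exists (n : nat) (S : nat -> set V),
       (forall i, (i < n)%N -> dT_diam_le C (S i) d) /\
       (forall a, A a -> exists2 i, (i < n)%N & S i a)].

Lemma tauE (A : set V) : tau C A = inf (tau_covers A).
Proof. by []. Qed.

Lemma tau_le_cover (A : set V) (d : R) : tau_covers A d -> tau C A <= d.
Proof.
move=> hd; rewrite tauE; apply: ge_inf => //.
by exists 0 => e [e0 _]; exact: ltW.
Qed.

Lemma tau_cover_lt (A : set V) (D : R) :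
  0 < tau C A -> tau C A < D -> exists2 d, tau_covers A d & d < D.
Proof.
move=> tau0; apply: inf_lt; apply/set0P/eqP => covers0.
by move: tau0; rewrite tauE /tau_covers covers0 inf0 ltxx.
Qed.

(* The empty set has tau = 0, since the empty cover is admissible for every d. *)
Lemma tau_pos_nonempty (A : set V) : 0 < tau C A -> A !=set0.
Proof.
move=> tau0; apply/set0P/eqP => A0.
have : tau C A <= tau C A / 2.
  apply: tau_le_cover; split; first by rewrite divr_gt0.
  by exists 0%N, (fun _ => set0); split => // a; rewrite A0.
lra.
Qed.

(* A nonempty d_T-bounded set is order bounded by a multiple of an interior u:
   a0 <= K u and y <= b a0 with b < exp M + 1 give y <= (exp M + 1) K u. *)
Lemma dT_bounded_dominated (u : V) (A : set V) :
  interior C u -> dT_bounded C A -> A !=set0 ->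
  exists2 c : R, 0 < c & forall y, A y -> C (c *: u - y).
Proof.
move=> hu [hAi [M hM]] [a0 Aa0]; have Cu := interior_subset hu.
have [K K1 hK] := interior_absorbing a0 hu.
set B := expR M + 1.
have eM := expR_gt0 M.
have B0 : 0 < B by rewrite /B; lra.
exists (B * K); first by rewrite mulr_gt0 //; lra.
move=> y Ay.
have [b [b1 [_ hy]] bB] : exists2 b, thompson_set a0 y b & b < B.
  apply: thompson_lt (hAi _ Aa0) (hAi _ Ay) B0 _.
  apply: le_lt_trans (hM _ _ Aa0 Ay) _.
  by rewrite -[X in X < _](expRK M) ltr_ln ?posrE // /B; lra.
rewrite /cle in hy.
have hbK : C ((b * K) *: u - y).
  have -> : (b * K) *: u - y = b *: (K *: u - a0) + (b *: a0 - y).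
    by rewrite scalerBr scalerA addrA subrK.
  by apply: cone_add => //; apply: cone_scale => //; lra.
by apply: (cone_dom_mono Cu hbK); rewrite ler_pM2r; lra.
Qed.

Section Translation.
Variable u : V.
Hypothesis hu : interior C u.

(* Translation by u is d_T-continuous, with delta = e: it is d_T-nonexpansive. *)
Lemma translation_continuous (x : V) : interior C x ->
  forall e : R, 0 < e -> exists2 delta : R, 0 < delta & forall y, interior C y ->
    thompson C x y < delta -> thompson C (x + u) (y + u) < e.
Proof.
move=> hx e e0; exists e => // y hy hxy.
have [c c0 [hux huy]] := common_dominator x y hu.
have E1 : 1 < expR e by rewrite expR_gt1.
have hxy' : thompson C x y < ln (expR e) by rewrite expRK.
apply: le_lt_trans (thompson_shift_le hx hy c0 hux huy (expR_gt0 e) hxy') _.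
have g1 := shift_ratio_gt1 E1 c0.
rewrite -[X in _ < X](expRK e) ltr_ln ?posrE; [|lra|lra].
exact: shift_ratio_lt.
Qed.

Lemma translation_condensing (A : set V) : A `<=` interior C ->
  dT_bounded C A -> 0 < tau C A -> tau C ((fun x => x + u) @` A) < tau C A.
Proof.
move=> hAD hAb tau0; set t := tau C A in tau0 *.
have [c c0 hc] := dT_bounded_dominated hu hAb (tau_pos_nonempty tau0).
have E1 : 1 < expR t by rewrite expR_gt1.
have [B EB gBE] := shift_ratio_gap E1 c0.
have B1 : 1 < B by lra.
have tB : t < ln B by rewrite -[X in X < _](expRK t) ltr_ln ?posrE ?expR_gt0 //; lra.
have [d [d0 [n [S [hS hcov]]]] dB] := tau_cover_lt tau0 tB.
have g1 := shift_ratio_gt1 B1 c0.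
apply: (@le_lt_trans _ _ (ln (shift_ratio B c))).
  apply: tau_le_cover; split; first exact: ln_gt0.
  exists n, (fun i => (fun x => x + u) @` (S i `&` A)); split.
    move=> i ni _ _ [x [Sx Ax] <-] [y [Sy Ay] <-].
    apply: thompson_shift_le (hAD _ Ax) (hAD _ Ay) c0 (hc _ Ax) (hc _ Ay) _ _.
      lra.
    exact: le_lt_trans (hS i ni x y Sx Sy) dB.
  move=> _ [a Aa <-]; have [i ni Sia] := hcov a Aa.
  by exists i => //; exists a.
by rewrite -[X in _ < X](expRK t) ltr_ln ?posrE ?expR_gt0 //; lra.
Qed.

End Translation.
End TranslationCondensing.

Theorem lemma2p4 (R : realType) (V : completeNormedModType R) (C : set V)
  (hC : is_closed_cone C) (hN : normal_cone C) (hint : interior C !=set0)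
  (u : V) (hu : interior C u) :
  tau_condensing C (interior C) (fun x => x + u).
Proof.
split; first by move=> x hx; exact: interior_addl (interior_subset hx) hu.
split; first exact: translation_continuous.
exact: translation_condensing.
Qed.
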